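(* Fix $n\in\mathbb N$. Let $\mathfrak M\models\mathrm{I}\Delta_0$ and $a\in M$. Then: (1) $a+1\in\Sigma_n\text{-}\mathrm{Card}^{\mathfrak M}(a)$ if and only if $\Sigma_n\text{-}\mathrm{Card}^{\mathfrak M}(a)$ is closed under $x\mapsto x+1$; (2) $2a\in\Sigma_n\text{-}\mathrm{Card}^{\mathfrak M}(a)$ if and only if $\Sigma_n\text{-}\mathrm{Card}^{\mathfrak M}(a)$ is closed under $x\mapsto2x$; (3) $a^2\in\Sigma_n\text{-}\mathrm{Card}^{\mathfrak M}(a)$ if and only if $\Sigma_n\text{-}\mathrm{Card}^{\mathfrak M}(a)$ is closed under $x\mapsto x^2$.
   Context: $\mathrm{I}\Delta_0$ is first-order arithmetic with induction for bounded formulas. Numbers $x$ are identified with $\{v:v<x\}$. For $\mathfrak M\models\mathrm{I}\Delta_0$ and $a\in M$, $\Sigma_n\text{-}\mathrm{Card}^{\mathfrak M}(a)=\{b\in M:$ in $\mathfrak M$ there is an injection from $b$ into $a$ whose graph is definable by a $\Sigma_n$ formula with parameters$\}$. *)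

Inductive term : Type :=
  | tvar : nat -> term
  | tzero : term
  | tone : term
  | tplus : term -> term -> term
  | ttimes : term -> term -> term.

(* Variables are de Bruijn indices: a quantifier binds index 0.
   In the bounded quantifiers [fball t phi] / [fbex t phi] the bound term
   [t] lives in the OUTER scope (it is not affected by the binder). *)
Inductive formula : Type :=
  | feq : term -> term -> formula
  | flt : term -> term -> formula
  | fnot : formula -> formula
  | fand : formula -> formula -> formula
  | for_ : formula -> formula -> formula
  | fimp : formula -> formula -> formula
  | fall : formula -> formula
  | fex : formula -> formula
  | fball : term -> formula -> formula
  | fbex : term -> formula -> formula.

Record structure : Type := Structure {
  carrier :> Type;
  s_zero : carrier;
  s_one : carrier;
  s_add : carrier -> carrier -> carrier;
  s_mul : carrier -> carrier -> carrier;
  s_lt : carrier -> carrier -> Prop }.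

Definition scons {M : Type} (x : M) (e : nat -> M) : nat -> M :=
  fun i => match i with 0 => x | S j => e j end.

Fixpoint eval (M : structure) (e : nat -> M) (t : term) : M :=
  match t with
  | tvar i => e i
  | tzero => s_zero M
  | tone => s_one M
  | tplus t1 t2 => s_add M (eval M e t1) (eval M e t2)
  | ttimes t1 t2 => s_mul M (eval M e t1) (eval M e t2)
  end.

Fixpoint sat (M : structure) (e : nat -> M) (phi : formula) : Prop :=
  match phi with
  | feq t1 t2 => eval M e t1 = eval M e t2
  | flt t1 t2 => s_lt M (eval M e t1) (eval M e t2)
  | fnot p => ~ sat M e p
  | fand p q => sat M e p /\ sat M e q
  | for_ p q => sat M e p \/ sat M e q
  | fimp p q => sat M e p -> sat M e q
  | fall p => forall x : M, sat M (scons x e) p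
  | fex p => exists x : M, sat M (scons x e) p
  | fball t p => forall x : M, s_lt M x (eval M e t) -> sat M (scons x e) p
  | fbex t p => exists x : M, s_lt M x (eval M e t) /\ sat M (scons x e) p
  end.

Inductive IsDelta0 : formula -> Prop :=
  | d0_eq t1 t2 : IsDelta0 (feq t1 t2)
  | d0_lt t1 t2 : IsDelta0 (flt t1 t2)
  | d0_not p : IsDelta0 p -> IsDelta0 (fnot p)
  | d0_and p q : IsDelta0 p -> IsDelta0 q -> IsDelta0 (fand p q)
  | d0_or p q : IsDelta0 p -> IsDelta0 q -> IsDelta0 (for_ p q)
  | d0_imp p q : IsDelta0 p -> IsDelta0 q -> IsDelta0 (fimp p q)
  | d0_ball t p : IsDelta0 p -> IsDelta0 (fball t p)
  | d0_bex t p : IsDelta0 p -> IsDelta0 (fbex t p).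

Inductive ExBlock (P : formula -> Prop) : formula -> Prop :=
  | eb_base p : P p -> ExBlock P p
  | eb_ex p : ExBlock P p -> ExBlock P (fex p).

Inductive AllBlock (P : formula -> Prop) : formula -> Prop :=
  | ab_base p : P p -> AllBlock P p
  | ab_all p : AllBlock P p -> AllBlock P (fall p).

Fixpoint IsSigma (n : nat) : formula -> Prop :=
  match n with
  | 0 => IsDelta0
  | S m => ExBlock (IsPi m)
  end
with IsPi (n : nat) : formula -> Prop :=
  match n with
  | 0 => IsDelta0
  | S m => AllBlock (IsSigma m)
  end.

(** * Models of I Delta_0 : PA^- (Kaye's axioms) + Delta_0 induction *)
Definition PAminus (M : structure) : Prop :=
  let O := s_zero M in let I := s_one M in
  let add := s_add M in let mul := s_mul M in let lt := s_lt M in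
  (forall x y z, add (add x y) z = add x (add y z)) /\
  (forall x y, add x y = add y x) /\
  (forall x y z, mul (mul x y) z = mul x (mul y z)) /\
  (forall x y, mul x y = mul y x) /\
  (forall x y z, mul x (add y z) = add (mul x y) (mul x z)) /\
  (forall x, add x O = x /\ mul x O = O) /\
  (forall x, mul x I = x) /\
  (forall x, ~ lt x x) /\
  (forall x y z, lt x y -> lt y z -> lt x z) /\
  (forall x y, lt x y \/ x = y \/ lt y x) /\
  (forall x y z, lt x y -> lt (add x z) (add y z)) /\
  (forall x y z, lt O z -> lt x y -> lt (mul x z) (mul y z)) /\
  (forall x y, lt x y -> exists z, add x z = y) /\
  (lt O I /\ forall x, lt O x -> (I = x \/ lt I x)) /\
  (forall x, O = x \/ lt O x).

(* induction for Delta_0 formulas with parameters: the induction variable is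
   de Bruijn index 0, the parameters are given by the environment e *)
Definition Delta0Induction (M : structure) : Prop :=
  forall (phi : formula), IsDelta0 phi -> forall (e : nat -> M),
    sat M (scons (s_zero M) e) phi ->
    (forall x : M, sat M (scons x e) phi -> sat M (scons (s_add M x (s_one M)) e) phi) ->
    forall x : M, sat M (scons x e) phi.

Definition IDelta0Model (M : structure) : Prop := PAminus M /\ Delta0Induction M.

(* [b \in Sigma_n-Card(a)]: there is a Sigma_n formula phi(u, v, params)
   (u = index 0, v = index 1, parameters from the environment e) whose
   defined relation is exactly the graph of an injection from
   b = {u : u < b} into a = {v : v < a}. *)
Definition SigmaCard (n : nat) (M : structure) (a b : M) : Prop :=
  exists (phi : formula) (e : nat -> M),
    IsSigma n phi /\
    let R := fun u v : M => sat M (scons u (scons v e)) phi in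
    (forall u v, R u v -> s_lt M u b /\ s_lt M v a) /\
    (forall u, s_lt M u b -> exists v, R u v) /\
    (forall u v v', R u v -> R u v' -> v = v') /\
    (forall u u' v, R u v -> R u' v -> u = u').

From Stdlib Require Import Setoid Morphisms Classical.

(** An injection [x -> y] with Σ_n graph lifts to injections [x + 1 -> y + 1]
    (send the new point [x] to [y]), [2x -> 2y] (act on each half) and
    [x^2 -> y^2] (act on both base-[x] digits of [q x + r]; the digits exist by
    Δ_0-induction). Σ_n relations with parameters are closed under conjunction,
    disjunction and bounded quantification up to equivalence (pull the
    quantifier blocks to the front), so Σ_n injections compose. Hence
    [Σ_n-Card(a)] is downward closed under Σ_n injections; if [f a] injects into
    [a] then so does [f x] for every [x] in it, and conversely [a] itself is in
    [Σ_n-Card(a)]. *)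

Fixpoint trename (r : nat -> nat) (t : term) : term :=
  match t with
  | tvar i => tvar (r i)
  | tzero => tzero
  | tone => tone
  | tplus t1 t2 => tplus (trename r t1) (trename r t2)
  | ttimes t1 t2 => ttimes (trename r t1) (trename r t2)
  end.

Definition up_ren (r : nat -> nat) (i : nat) : nat :=
  match i with 0 => 0 | S k => S (r k) end.

Fixpoint frename (r : nat -> nat) (p : formula) : formula :=
  match p with
  | feq t1 t2 => feq (trename r t1) (trename r t2)
  | flt t1 t2 => flt (trename r t1) (trename r t2)
  | fnot p => fnot (frename r p)
  | fand p q => fand (frename r p) (frename r q)
  | for_ p q => for_ (frename r p) (frename r q)
  | fimp p q => fimp (frename r p) (frename r q)
  | fall p => fall (frename (up_ren r) p)
  | fex p => fex (frename (up_ren r) p)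
  | fball t p => fball (trename r t) (frename (up_ren r) p)
  | fbex t p => fbex (trename r t) (frename (up_ren r) p)
  end.

Lemma eval_ext M e e' t : (forall i, e i = e' i) -> eval M e t = eval M e' t.
Proof. intros E; induction t; simpl; congruence. Qed.

Lemma sat_ext M p : forall e e', (forall i, e i = e' i) -> (sat M e p <-> sat M e' p).
Proof.
  induction p; intros e e' E; simpl; rewrite ?(eval_ext M e e' _ E);
    rewrite ?(IHp e e' E), ?(IHp1 e e' E), ?(IHp2 e e' E); try reflexivity;
    assert (K : forall x, sat M (scons x e) p <-> sat M (scons x e') p)
      by (intro x; apply IHp; intros [|i]; simpl; auto);
    setoid_rewrite K; reflexivity.
Qed.

Lemma eval_rename M r t e : eval M e (trename r t) = eval M (fun i => e (r i)) t.
Proof. induction t; simpl; congruence. Qed.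

Lemma sat_rename M p : forall e r, sat M e (frename r p) <-> sat M (fun i => e (r i)) p.
Proof.
  induction p; intros e r; simpl; rewrite ?eval_rename, ?IHp, ?IHp1, ?IHp2; try reflexivity;
    assert (K : forall x, sat M (scons x e) (frename (up_ren r) p) <->
                          sat M (scons x (fun i => e (r i))) p)
      by (intro x; rewrite IHp; apply sat_ext; intros [|i]; reflexivity);
    setoid_rewrite K; reflexivity.
Qed.

Lemma sat_shift M x e p : sat M (scons x e) (frename S p) <-> sat M e p.
Proof. rewrite sat_rename; reflexivity. Qed.

Lemma delta0_rename p r : IsDelta0 p -> IsDelta0 (frename r p).
Proof. intros H; revert r; induction H; intros r; simpl; constructor; auto. Qed.

Lemma exblock_rename (C : formula -> Prop) :
  (forall p r, C p -> C (frename r p)) -> forall p r, ExBlock C p -> ExBlock C (frename r p).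
Proof.
  intros HC p r H; revert r; induction H; intros r; [apply eb_base | apply eb_ex]; auto.
Qed.

Lemma allblock_rename (C : formula -> Prop) :
  (forall p r, C p -> C (frename r p)) -> forall p r, AllBlock C p -> AllBlock C (frename r p).
Proof.
  intros HC p r H; revert r; induction H; intros r; [apply ab_base | apply ab_all]; auto.
Qed.

Lemma sigma_pi_rename n :
  (forall p r, IsSigma n p -> IsSigma n (frename r p)) /\
  (forall p r, IsPi n p -> IsPi n (frename r p)).
Proof.
  induction n as [|m [HS HP]]; simpl.
  - split; apply delta0_rename.
  - split; [apply exblock_rename, HP | apply allblock_rename, HS].
Qed.

Lemma delta0_sigma_pi n p : IsDelta0 p -> IsSigma n p /\ IsPi n p.
Proof.
  intros H; induction n as [|m [HS HP]]; simpl; [tauto|].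
  split; constructor; assumption.
Qed.

Section PrenexClosure.
Variable M : structure.
Variable op : formula -> formula -> formula.
Variable conn : Prop -> Prop -> Prop.
Context {conn_iff : Proper (iff ==> iff ==> iff) conn}.
Hypothesis sat_op : forall e p q, sat M e (op p q) <-> conn (sat M e p) (sat M e q).
Hypothesis op_delta0 : forall p q, IsDelta0 p -> IsDelta0 q -> IsDelta0 (op p q).
Hypothesis conn_exl : forall (P : M -> Prop) B, conn (exists x, P x) B <-> exists x, conn (P x) B.
Hypothesis conn_exr : forall A (P : M -> Prop), conn A (exists x, P x) <-> exists x, conn A (P x).
Hypothesis conn_alll : forall (P : M -> Prop) B, conn (forall x, P x) B <-> forall x, conn (P x) B.
Hypothesis conn_allr : forall A (P : M -> Prop), conn A (forall x, P x) <-> forall x, conn A (P x).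

Definition conn_closed (C : formula -> Prop) : Prop :=
  forall p q, C p -> C q ->
    exists c, C c /\ forall e, sat M e c <-> conn (sat M e p) (sat M e q).

Section Blocks.
Variable C : formula -> Prop.
Hypothesis C_rename : forall p r, C p -> C (frename r p).
Hypothesis C_closed : conn_closed C.

Lemma exblock_conn_closed : conn_closed (ExBlock C).
Proof.
  assert (pull_right : forall p q, C p -> ExBlock C q ->
            exists c, ExBlock C c /\ forall e, sat M e c <-> conn (sat M e p) (sat M e q)).
  { intros p q Hp Hq; revert p Hp; induction Hq as [q Hq|q Hq IH]; intros p Hp.
    - destruct (C_closed p q Hp Hq) as [c [Hc Ec]]; exists c; split; [apply eb_base|]; assumption.
    - destruct (IH (frename S p) (C_rename p S Hp)) as [c [Hc Ec]].
      exists (fex c); split; [apply eb_ex; exact Hc|].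
      intro e; simpl; rewrite conn_exr; setoid_rewrite Ec; setoid_rewrite sat_shift; reflexivity. }
  intros p q Hp; revert q; induction Hp as [p Hp|p Hp IH]; intros q Hq;
    [apply pull_right; assumption|].
  destruct (IH (frename S q) (exblock_rename C C_rename q S Hq)) as [c [Hc Ec]].
  exists (fex c); split; [apply eb_ex; exact Hc|].
  intro e; simpl; rewrite conn_exl; setoid_rewrite Ec; setoid_rewrite sat_shift; reflexivity.
Qed.

Lemma allblock_conn_closed : conn_closed (AllBlock C).
Proof.
  assert (pull_right : forall p q, C p -> AllBlock C q ->
            exists c, AllBlock C c /\ forall e, sat M e c <-> conn (sat M e p) (sat M e q)).
  { intros p q Hp Hq; revert p Hp; induction Hq as [q Hq|q Hq IH]; intros p Hp.
    - destruct (C_closed p q Hp Hq) as [c [Hc Ec]]; exists c; split; [apply ab_base|]; assumption.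
    - destruct (IH (frename S p) (C_rename p S Hp)) as [c [Hc Ec]].
      exists (fall c); split; [apply ab_all; exact Hc|].
      intro e; simpl; rewrite conn_allr; setoid_rewrite Ec; setoid_rewrite sat_shift; reflexivity. }
  intros p q Hp; revert q; induction Hp as [p Hp|p Hp IH]; intros q Hq;
    [apply pull_right; assumption|].
  destruct (IH (frename S q) (allblock_rename C C_rename q S Hq)) as [c [Hc Ec]].
  exists (fall c); split; [apply ab_all; exact Hc|].
  intro e; simpl; rewrite conn_alll; setoid_rewrite Ec; setoid_rewrite sat_shift; reflexivity.
Qed.

End Blocks.

Lemma sigma_pi_conn_closed n : conn_closed (IsSigma n) /\ conn_closed (IsPi n).
Proof.
  induction n as [|m [HS HP]]; simpl.
  - split; intros p q Hp Hq; exists (op p q); split; auto.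
  - destruct (sigma_pi_rename m) as [RS RP].
    split; [apply exblock_conn_closed | apply allblock_conn_closed]; assumption.
Qed.

End PrenexClosure.

Lemma sigma_and_closed M n : conn_closed M and (IsSigma n).
Proof.
  apply (@sigma_pi_conn_closed M fand and _).
  - reflexivity.
  - constructor; assumption.
  - firstorder.
  - firstorder.
  - intros P B; split; [firstorder | intros H; split; [apply H | apply (H (s_zero M))]].
  - intros A P; split; [firstorder | intros H; split; [apply (H (s_zero M)) | apply H]].
Qed.

Lemma sigma_or_closed M n : conn_closed M or (IsSigma n).
Proof.
  apply (@sigma_pi_conn_closed M for_ or _).
  - reflexivity.
  - constructor; assumption.
  - intros P B; split; [intros [[x H]|H]; [exists x | exists (s_zero M)]|]; firstorder.
  - intros A P; split; [intros [H|[x H]]; [exists (s_zero M) | exists x]|]; firstorder.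
  - intros P B; split; [firstorder|].
    intros H; destruct (classic B); [right; assumption | left; firstorder].
  - intros A P; split; [firstorder|].
    intros H; destruct (classic A); [left; assumption | right; firstorder].
Qed.

Definition sigma_definable n (M : structure) (P : (nat -> M) -> Prop) : Prop :=
  exists p, IsSigma n p /\ forall e, sat M e p <-> P e.

Lemma sigma_definable_and n (M : structure) (P Q : (nat -> M) -> Prop) :
  sigma_definable n M P -> sigma_definable n M Q -> sigma_definable n M (fun e => P e /\ Q e).
Proof.
  intros [p [Hp HP]] [q [Hq HQ]].
  destruct (sigma_and_closed M n p q Hp Hq) as [c [Hc Ec]].
  exists c; split; [exact Hc|]; intro e; rewrite Ec, HP, HQ; reflexivity.
Qed.

Lemma sigma_definable_or n (M : structure) (P Q : (nat -> M) -> Prop) :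
  sigma_definable n M P -> sigma_definable n M Q -> sigma_definable n M (fun e => P e \/ Q e).
Proof.
  intros [p [Hp HP]] [q [Hq HQ]].
  destruct (sigma_or_closed M n p q Hp Hq) as [c [Hc Ec]].
  exists c; split; [exact Hc|]; intro e; rewrite Ec, HP, HQ; reflexivity.
Qed.

Lemma sigma_definable_delta0 n (M : structure) p :
  IsDelta0 p -> sigma_definable n M (fun e => sat M e p).
Proof. intros H; exists p; split; [apply (delta0_sigma_pi n p H) | reflexivity]. Qed.

Lemma sigma_definable_instance n (M : structure) p i j (r : nat -> nat) :
  IsSigma n p ->
  sigma_definable n M (fun e => sat M (scons (e i) (scons (e j) (fun l => e (r l)))) p).
Proof.
  intros H; exists (frename (fun k => match k with 0 => i | 1 => j | S (S l) => r l end) p).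
  split; [apply (sigma_pi_rename n); exact H|].
  intro e; rewrite sat_rename; apply sat_ext; intros [|[|l]]; reflexivity.
Qed.

Lemma sigma_definable_bex n (M : structure) (P : (nat -> M) -> Prop) t :
  sigma_definable n M P ->
  sigma_definable n M (fun e => exists w, s_lt M w (eval M e t) /\ P (scons w e)).
Proof.
  intros HP; destruct n as [|m].
  - destruct HP as [p [Hp HP]]; exists (fbex t p); split; [constructor; exact Hp|].
    intro e; simpl; setoid_rewrite HP; reflexivity.
  - assert (Hlt : sigma_definable (S m) M
                     (fun e => s_lt M (e 0) (eval M e (trename S t)) /\ P e)).
    { apply sigma_definable_and; [|exact HP].
      apply (sigma_definable_delta0 _ _ (flt (tvar 0) (trename S t))); constructor. }
    destruct Hlt as [c [Hc Ec]]; exists (fex c); split; [apply eb_ex; exact Hc|].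
    intro e; simpl; setoid_rewrite Ec; setoid_rewrite eval_rename; reflexivity.
Qed.

Definition sigma_relation n (M : structure) (R : M -> M -> Prop) : Prop :=
  exists p e, IsSigma n p /\ forall u v, sat M (scons u (scons v e)) p <-> R u v.

Lemma sigma_relation_of_definable n (M : structure) (P : (nat -> M) -> Prop) (E : nat -> M)
  (R : M -> M -> Prop) :
  sigma_definable n M P -> (forall u v, P (scons u (scons v E)) <-> R u v) ->
  sigma_relation n M R.
Proof.
  intros [p [Hp HP]] HR; exists p, E; split; [exact Hp|].
  intros u v; rewrite HP; apply HR.
Qed.

Section Graphs.
Variable M : structure.
Local Notation "x + y" := (s_add M x y).
Local Notation "x * y" := (s_mul M x y).
Local Notation "x < y" := (s_lt M x y).
Local Notation "0" := (s_zero M).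
Local Notation "1" := (s_one M).

Definition inj_graph (R : M -> M -> Prop) (b a : M) : Prop :=
  (forall u v, R u v -> u < b /\ v < a) /\
  (forall u, u < b -> exists v, R u v) /\
  (forall u v v', R u v -> R u v' -> v = v') /\
  (forall u u' v, R u v -> R u' v -> u = u').

Definition id_graph (a u v : M) : Prop := u = v /\ u < a.

Definition comp_graph (R1 : M -> M -> Prop) (c : M) (R2 : M -> M -> Prop) (u v : M) :
  Prop :=
  exists w, w < c /\ R1 u w /\ R2 w v.

Definition succ_graph (R : M -> M -> Prop) (x a u v : M) : Prop :=
  (u < x /\ R u v) \/ (u = x /\ v = a).

Definition double_graph (R : M -> M -> Prop) (x a u v : M) : Prop :=
  (u < x /\ R u v) \/
  exists u', u' < x /\ exists v', v' < a /\ (u = x + u' /\ v = a + v') /\ R u' v'.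

Definition square_graph (R : M -> M -> Prop) (x a u v : M) : Prop :=
  exists q, q < x /\ exists r, r < x /\ exists s, s < a /\ exists t, t < a /\
    (u = q * x + r /\ v = s * a + t) /\ (R q s /\ R r t).

Lemma inj_graph_iff (R R' : M -> M -> Prop) b a :
  (forall u v, R u v <-> R' u v) -> inj_graph R b a -> inj_graph R' b a.
Proof. intros E; unfold inj_graph; setoid_rewrite E; trivial. Qed.

Lemma inj_graph_id a : inj_graph (id_graph a) a a.
Proof.
  unfold id_graph; split; [|split; [|split]].
  - intros u v [E H]; subst; auto.
  - intros u H; exists u; auto.
  - intros u v v' [E _] [E' _]; congruence.
  - intros u u' v [E _] [E' _]; congruence.
Qed.

Lemma inj_graph_comp R1 R2 a b c :
  inj_graph R1 b c -> inj_graph R2 c a -> inj_graph (comp_graph R1 c R2) b a.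
Proof.
  intros (F1 & F2 & F3 & F4) (G1 & G2 & G3 & G4); split; [|split; [|split]].
  - intros u v [w [_ [Fuw Gwv]]]; split; [apply (F1 _ _ Fuw) | apply (G1 _ _ Gwv)].
  - intros u Hu; destruct (F2 u Hu) as [w Fuw]; destruct (F1 _ _ Fuw) as [_ Hw].
    destruct (G2 w Hw) as [v Gwv]; exists v, w; auto.
  - intros u v v' [w [_ [Fuw Gwv]]] [w' [_ [Fuw' Gwv']]].
    rewrite (F3 _ _ _ Fuw Fuw') in Gwv; exact (G3 _ _ _ Gwv Gwv').
  - intros u u' v [w [_ [Fuw Gwv]]] [w' [_ [Fuw' Gwv']]].
    rewrite (G4 _ _ _ Gwv Gwv') in Fuw; exact (F4 _ _ _ Fuw Fuw').
Qed.

Section Arithmetic.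
Hypothesis Hpa : PAminus M.

Ltac paminus := let H := fresh in
  pose proof Hpa as H; unfold PAminus in H; cbv zeta in H; decompose [and] H; clear H; eauto.

Lemma add_assoc x y z : x + y + z = x + (y + z). Proof. paminus. Qed.
Lemma add_comm x y : x + y = y + x. Proof. paminus. Qed.
Lemma mul_comm x y : x * y = y * x. Proof. paminus. Qed.
Lemma mul_add_distr_l x y z : x * (y + z) = x * y + x * z. Proof. paminus. Qed.
Lemma add_0_r x : x + 0 = x. Proof. paminus; firstorder. Qed.
Lemma mul_0_r x : x * 0 = 0. Proof. paminus; firstorder. Qed.
Lemma mul_1_r x : x * 1 = x. Proof. paminus. Qed.
Lemma lt_irrefl x : ~ x < x. Proof. paminus. Qed.
Lemma lt_trans x y z : x < y -> y < z -> x < z. Proof. paminus. Qed.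
Lemma lt_trichotomy x y : x < y \/ x = y \/ y < x. Proof. paminus. Qed.
Lemma add_lt_mono_r x y z : x < y -> x + z < y + z. Proof. paminus. Qed.
Lemma mul_lt_mono_pos_r x y z : 0 < z -> x < y -> x * z < y * z. Proof. paminus. Qed.
Lemma lt_exists_add x y : x < y -> exists z, x + z = y. Proof. paminus. Qed.
Lemma lt_0_1 : 0 < 1. Proof. paminus. Qed.
Lemma pos_ge_1 x : 0 < x -> 1 = x \/ 1 < x. Proof. paminus. Qed.
Lemma zero_or_pos x : 0 = x \/ 0 < x. Proof. paminus. Qed.

Definition s_le x y := x < y \/ x = y.

Lemma mul_0_l x : 0 * x = 0.
Proof. rewrite mul_comm; apply mul_0_r. Qed.

Lemma mul_succ_l x y : (x + 1) * y = x * y + y.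
Proof. rewrite mul_comm, mul_add_distr_l, mul_1_r, (mul_comm y x); reflexivity. Qed.

Lemma two_mul y : (1 + 1) * y = y + y.
Proof. rewrite mul_comm, mul_add_distr_l, mul_1_r; reflexivity. Qed.

Lemma add_lt_mono_l x y z : x < y -> z + x < z + y.
Proof. rewrite (add_comm z x), (add_comm z y); apply add_lt_mono_r. Qed.

Lemma add_cancel_l x y z : z + x = z + y -> x = y.
Proof.
  intros E; destruct (lt_trichotomy x y) as [H|[H|H]]; [|exact H|];
    apply (add_lt_mono_l _ _ z) in H; rewrite E in H; destruct (lt_irrefl _ H).
Qed.

Lemma add_lt_cancel_l x y z : z + x < z + y -> x < y.
Proof.
  intros H; destruct (lt_trichotomy x y) as [H'|[<-|H']]; [exact H'| |];
    exfalso; [apply (lt_irrefl _ H) |].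
  apply (lt_irrefl _ (lt_trans _ _ _ H (add_lt_mono_l _ _ z H'))).
Qed.

Lemma nlt_0_r x : ~ x < 0.
Proof.
  intros H; destruct (zero_or_pos x) as [<-|H'];
    [apply (lt_irrefl _ H) | apply (lt_irrefl _ (lt_trans _ _ _ H H'))].
Qed.

Lemma le_add_r x z : s_le x (x + z).
Proof.
  destruct (zero_or_pos z) as [<-|H]; [right; rewrite add_0_r; reflexivity | left].
  rewrite <- (add_0_r x) at 1; apply add_lt_mono_l, H.
Qed.

Lemma lt_le_trans x y z : x < y -> s_le y z -> x < z.
Proof. intros H [H'| <-]; [apply (lt_trans _ _ _ H H') | exact H]. Qed.

Lemma le_trans x y z : s_le x y -> s_le y z -> s_le x z.
Proof. intros [H| <-] H'; [left; apply (lt_le_trans _ _ _ H H') | exact H']. Qed.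

Lemma nlt_add_r x z : ~ x + z < x.
Proof. intros H; apply (lt_irrefl _ (lt_le_trans _ _ _ H (le_add_r x z))). Qed.

Lemma lt_lt_add_r x y z : x < y -> x < y + z.
Proof. intros H; apply (lt_le_trans _ _ _ H (le_add_r y z)). Qed.

Lemma lt_succ_diag_r x : x < x + 1.
Proof. rewrite <- (add_0_r x) at 1; apply add_lt_mono_l, lt_0_1. Qed.

Lemma le_succ_l x y : x < y -> s_le (x + 1) y.
Proof.
  intros H; destruct (lt_exists_add _ _ H) as [z <-].
  destruct (zero_or_pos z) as [<-|Hz]; [rewrite add_0_r in H; destruct (lt_irrefl _ H)|].
  destruct (pos_ge_1 _ Hz) as [<-|Hz1]; [right; reflexivity | left; apply add_lt_mono_l, Hz1].
Qed.

Lemma lt_succ_r u x : u < x + 1 -> u < x \/ u = x.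
Proof.
  intros H; destruct (lt_trichotomy u x) as [H'|[H'|H']]; auto.
  destruct (lt_irrefl _ (lt_le_trans _ _ _ H (le_succ_l _ _ H'))).
Qed.

Lemma mul_le_mono_r x y z : s_le x y -> s_le (x * z) (y * z).
Proof.
  intros [H| <-]; [|right; reflexivity].
  destruct (zero_or_pos z) as [<-|Hz]; [right; rewrite !mul_0_r; reflexivity|].
  left; apply mul_lt_mono_pos_r; assumption.
Qed.

Lemma lt_mul_add q r q' r' d : r < d -> q < q' -> q * d + r < q' * d + r'.
Proof.
  intros Hr Hq; apply (add_lt_mono_l _ _ (q * d)) in Hr; rewrite <- mul_succ_l in Hr.
  apply (lt_le_trans _ _ _ Hr), (le_trans _ (q' * d));
    [apply mul_le_mono_r, le_succ_l, Hq | apply le_add_r].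
Qed.

Lemma div_unique d q r q' r' : r < d -> r' < d -> q * d + r = q' * d + r' -> q = q' /\ r = r'.
Proof.
  intros Hr Hr' E; destruct (lt_trichotomy q q') as [H|[<-|H]].
  - pose proof (lt_mul_add _ _ _ r' _ Hr H) as L; rewrite E in L; destruct (lt_irrefl _ L).
  - split; [reflexivity | exact (add_cancel_l _ _ _ E)].
  - pose proof (lt_mul_add _ _ _ r _ Hr' H) as L; rewrite E in L; destruct (lt_irrefl _ L).
Qed.

Lemma inj_graph_succ R x a : inj_graph R x a -> inj_graph (succ_graph R x a) (x + 1) (a + 1).
Proof.
  intros (G1 & G2 & G3 & G4); split; [|split; [|split]].
  - intros u v [[Hu Ruv]|[-> ->]]; split; try apply lt_succ_diag_r.
    + exact (lt_trans _ _ _ Hu (lt_succ_diag_r _)).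
    + exact (lt_trans _ _ _ (proj2 (G1 _ _ Ruv)) (lt_succ_diag_r _)).
  - intros u Hu; destruct (lt_succ_r _ _ Hu) as [H| ->].
    + destruct (G2 u H) as [v Ruv]; exists v; left; auto.
    + exists a; right; auto.
  - intros u v v' [[Hu Ruv]|[-> ->]] [[Hu' Ruv']|[E ->]]; subst.
    all: solve [exact (G3 _ _ _ Ruv Ruv') | reflexivity
               | destruct (lt_irrefl _ Hu) | destruct (lt_irrefl _ Hu')].
  - intros u u' v [[Hu Ruv]|[-> ->]] [[Hu' Ruv']|[-> E]]; subst.
    all: solve [exact (G4 _ _ _ Ruv Ruv') | reflexivity
               | destruct (lt_irrefl _ (proj2 (G1 _ _ Ruv)))
               | destruct (lt_irrefl _ (proj2 (G1 _ _ Ruv')))].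
Qed.

Lemma lt_add_split u x : u < x + x -> u < x \/ exists z, z < x /\ u = x + z.
Proof.
  intros Hu; destruct (lt_trichotomy u x) as [H|[->|H]]; [left; exact H | right; exists 0 | right].
  - rewrite add_0_r; split; [|reflexivity].
    apply (add_lt_cancel_l _ _ x); rewrite add_0_r; exact Hu.
  - destruct (lt_exists_add _ _ H) as [z <-].
    exists z; split; [exact (add_lt_cancel_l _ _ _ Hu) | reflexivity].
Qed.

Lemma inj_graph_double R x a : inj_graph R x a -> inj_graph (double_graph R x a) (x + x) (a + a).
Proof.
  intros (G1 & G2 & G3 & G4); split; [|split; [|split]].
  - intros u v [[Hu Ruv]|[u' [Hu' [v' [Hv' [[-> ->] _]]]]]].
    + split; apply lt_lt_add_r; [exact Hu | exact (proj2 (G1 _ _ Ruv))].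
    + split; apply add_lt_mono_l; assumption.
  - intros u Hu; destruct (lt_add_split _ _ Hu) as [H|[z [Hz ->]]].
    + destruct (G2 u H) as [v Ruv]; exists v; left; auto.
    + destruct (G2 z Hz) as [v Rzv]; exists (a + v); right.
      exists z; split; [exact Hz|]; exists v; split; [exact (proj2 (G1 _ _ Rzv))|]; auto.
  - intros u v v' [[Hu Ruv]|[u1 [_ [v1 [_ [[-> ->] Ruv]]]]]]
                   [[Hu' Ruv']|[u2 [_ [v2 [_ [[E ->] Ruv']]]]]].
    + exact (G3 _ _ _ Ruv Ruv').
    + subst u; destruct (nlt_add_r _ _ Hu).
    + destruct (nlt_add_r _ _ Hu').
    + apply add_cancel_l in E; subst u2; rewrite (G3 _ _ _ Ruv Ruv'); reflexivity.
  - intros u u' v [[Hu Ruv]|[u1 [_ [v1 [_ [[-> ->] Ruv]]]]]]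
                   [[Hu' Ruv']|[u2 [_ [v2 [_ [[-> E] Ruv']]]]]].
    + exact (G4 _ _ _ Ruv Ruv').
    + subst v; destruct (nlt_add_r _ _ (proj2 (G1 _ _ Ruv))).
    + destruct (nlt_add_r _ _ (proj2 (G1 _ _ Ruv'))).
    + apply add_cancel_l in E; subst v2; rewrite (G4 _ _ _ Ruv Ruv'); reflexivity.
Qed.

Section Induction.
Hypothesis Hind : Delta0Induction M.

Lemma div_exists x : 0 < x -> forall u, exists q r, r < x /\ u = q * x + r.
Proof.
  intros Hx u.
  set (phi := fbex (tplus (tvar 0) tone)
                (fbex (tvar 2) (feq (tvar 2) (tplus (ttimes (tvar 1) (tvar 3)) (tvar 0))))).
  assert (Hu : sat M (scons u (scons x (fun _ => x))) phi).
  { apply Hind; [repeat constructor | |]; simpl.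
    - exists 0; split; [apply lt_succ_diag_r|].
      exists 0; split; [exact Hx | rewrite mul_0_l, add_0_r; reflexivity].
    - intros y [q [Hq [r [Hr E]]]]; destruct (le_succ_l _ _ Hr) as [H|H].
      + exists q; split; [exact (lt_trans _ _ _ Hq (lt_succ_diag_r _))|].
        exists (r + 1); split; [exact H | rewrite E, add_assoc; reflexivity].
      + exists (q + 1); split; [apply add_lt_mono_r, Hq|].
        exists 0; split; [exact Hx | rewrite add_0_r, mul_succ_l, E, add_assoc, H; reflexivity]. }
  destruct Hu as [q [_ [r [Hr E]]]]; exists q, r; auto.
Qed.

Lemma inj_graph_square R x a : inj_graph R x a -> inj_graph (square_graph R x a) (x * x) (a * a).
Proof.
  intros (G1 & G2 & G3 & G4); split; [|split; [|split]].
  - intros u v [q [Hq [r [Hr [s [Hs [t [Ht [[-> ->] _]]]]]]]]].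
    split; [rewrite <- (add_0_r (x * x)) | rewrite <- (add_0_r (a * a))];
      apply lt_mul_add; assumption.
  - intros u Hu; destruct (zero_or_pos x) as [<-|Hx].
    { rewrite mul_0_r in Hu; destruct (nlt_0_r _ Hu). }
    destruct (div_exists x Hx u) as [q [r [Hr ->]]].
    assert (Hq : q < x).
    { destruct (lt_trichotomy q x) as [H|[->|H]]; [exact H| |]; exfalso.
      - exact (nlt_add_r _ _ Hu).
      - pose proof (lt_mul_add x 0 q r x Hx H) as L; rewrite add_0_r in L.
        exact (lt_irrefl _ (lt_trans _ _ _ L Hu)). }
    destruct (G2 q Hq) as [s Rqs]; destruct (G2 r Hr) as [t Rrt].
    exists (s * a + t), q; split; [exact Hq|]; exists r; split; [exact Hr|].
    exists s; split; [exact (proj2 (G1 _ _ Rqs))|].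
    exists t; split; [exact (proj2 (G1 _ _ Rrt))|]; auto.
  - intros u v v' [q [_ [r [Hr [s [_ [t [_ [[-> ->] [Rqs Rrt]]]]]]]]]]
                  [q' [_ [r' [Hr' [s' [_ [t' [_ [[E ->] [Rqs' Rrt']]]]]]]]]].
    destruct (div_unique _ _ _ _ _ Hr Hr' E) as [<- <-].
    rewrite (G3 _ _ _ Rqs Rqs'), (G3 _ _ _ Rrt Rrt'); reflexivity.
  - intros u u' v [q [Hq [r [_ [s [_ [t [Ht [[-> ->] [Rqs Rrt]]]]]]]]]]
                   [q' [Hq' [r' [_ [s' [_ [t' [Ht' [[-> E] [Rqs' Rrt']]]]]]]]]].
    destruct (div_unique _ _ _ _ _ Ht Ht' E) as [<- <-].
    rewrite (G4 _ _ _ Rqs Rqs'), (G4 _ _ _ Rrt Rrt'); reflexivity.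
Qed.

End Induction.
End Arithmetic.
End Graphs.

Fixpoint interleave {A : Type} (e1 e2 : nat -> A) (i : nat) : A :=
  match i with
  | 0 => e1 0
  | 1 => e2 0
  | S (S j) => interleave (fun k => e1 (S k)) (fun k => e2 (S k)) j
  end.

Lemma interleave_even {A : Type} k : forall (e1 e2 : nat -> A), interleave e1 e2 (k + k) = e1 k.
Proof.
  induction k as [|k IH]; intros e1 e2; [reflexivity|].
  simpl; rewrite <- plus_n_Sm; apply IH.
Qed.

Lemma interleave_odd {A : Type} k : forall (e1 e2 : nat -> A), interleave e1 e2 (S (k + k)) = e2 k.
Proof.
  induction k as [|k IH]; intros e1 e2; [reflexivity|].
  simpl; rewrite <- plus_n_Sm; apply IH.
Qed.

Lemma sigma_relation_id n M a : sigma_relation n M (id_graph M a).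
Proof.
  apply (sigma_relation_of_definable n M _ (scons a (fun _ => a)) _
           (sigma_definable_delta0 n M (fand (feq (tvar 0) (tvar 1)) (flt (tvar 0) (tvar 2)))
              ltac:(repeat constructor))).
  reflexivity.
Qed.

Lemma sigma_relation_comp n M R1 c R2 :
  sigma_relation n M R1 -> sigma_relation n M R2 -> sigma_relation n M (comp_graph M R1 c R2).
Proof.
  intros [p1 [e1 [Hp1 HR1]]] [p2 [e2 [Hp2 HR2]]].
  assert (E1 : forall x y,
             sat M (scons x (scons y (fun l => interleave e1 e2 (l + l)))) p1 <-> R1 x y).
  { intros x y; rewrite <- HR1; apply sat_ext.
    intros [|[|l]]; [reflexivity | reflexivity | exact (interleave_even l e1 e2)]. }
  assert (E2 : forall x y,
             sat M (scons x (scons y (fun l => interleave e1 e2 (S (l + l))))) p2 <-> R2 x y).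
  { intros x y; rewrite <- HR2; apply sat_ext.
    intros [|[|l]]; [reflexivity | reflexivity | exact (interleave_odd l e1 e2)]. }
  (* Under the bounded quantifier: 0 = w, 1 = u, 2 = v, 3 = c, and from 4 on the
     parameters of R1 and R2, interleaved. *)
  apply (sigma_relation_of_definable n M _ (scons c (interleave e1 e2)) _
    (sigma_definable_bex _ _ _ (tvar 2) (sigma_definable_and _ _ _ _
       (sigma_definable_instance _ _ p1 1 0 (fun l => 4 + (l + l)) Hp1)
       (sigma_definable_instance _ _ p2 0 2 (fun l => 5 + (l + l)) Hp2)))).
  intros u v; simpl; setoid_rewrite E1; setoid_rewrite E2; reflexivity.
Qed.

Lemma sigma_relation_succ_graph n M R x a :
  sigma_relation n M R -> sigma_relation n M (succ_graph M R x a).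
Proof.
  intros [p [e [Hp HR]]].
  (* Variables: 0 = u, 1 = v, 2 = x, 3 = a, and from 4 on the parameters of R. *)
  apply (sigma_relation_of_definable n M _ (scons x (scons a e)) _
    (sigma_definable_or _ _ _ _
      (sigma_definable_and _ _ _ _
         (sigma_definable_delta0 _ _ (flt (tvar 0) (tvar 2)) ltac:(repeat constructor))
         (sigma_definable_instance _ _ p 0 1 (Nat.add 4) Hp))
      (sigma_definable_delta0 _ _ (fand (feq (tvar 0) (tvar 2)) (feq (tvar 1) (tvar 3)))
         ltac:(repeat constructor)))).
  intros u v; simpl; rewrite HR; reflexivity.
Qed.

Lemma sigma_relation_double_graph n M R x a :
  sigma_relation n M R -> sigma_relation n M (double_graph M R x a).
Proof.
  intros [p [e [Hp HR]]].
  (* Under the two bounded quantifiers: 0 = v', 1 = u', 2 = u, 3 = v, 4 = x, 5 = a,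
     and from 6 on the parameters of R. *)
  apply (sigma_relation_of_definable n M _ (scons x (scons a e)) _
    (sigma_definable_or _ _ _ _
      (sigma_definable_and _ _ _ _
         (sigma_definable_delta0 _ _ (flt (tvar 0) (tvar 2)) ltac:(repeat constructor))
         (sigma_definable_instance _ _ p 0 1 (Nat.add 4) Hp))
      (sigma_definable_bex _ _ _ (tvar 2) (sigma_definable_bex _ _ _ (tvar 4)
        (sigma_definable_and _ _ _ _
          (sigma_definable_delta0 _ _ (fand (feq (tvar 2) (tplus (tvar 4) (tvar 1)))
                                            (feq (tvar 3) (tplus (tvar 5) (tvar 0))))
             ltac:(repeat constructor))
          (sigma_definable_instance _ _ p 1 0 (Nat.add 6) Hp)))))).
  intros u v; simpl; setoid_rewrite HR; reflexivity.
Qed.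

Lemma sigma_relation_square_graph n M R x a :
  sigma_relation n M R -> sigma_relation n M (square_graph M R x a).
Proof.
  intros [p [e [Hp HR]]].
  (* Under the four bounded quantifiers: 0 = t, 1 = s, 2 = r, 3 = q, 4 = u, 5 = v,
     6 = x, 7 = a, and from 8 on the parameters of R. *)
  apply (sigma_relation_of_definable n M _ (scons x (scons a e)) _
    (sigma_definable_bex _ _ _ (tvar 2) (sigma_definable_bex _ _ _ (tvar 3)
      (sigma_definable_bex _ _ _ (tvar 5) (sigma_definable_bex _ _ _ (tvar 6)
        (sigma_definable_and _ _ _ _
          (sigma_definable_delta0 _ _
             (fand (feq (tvar 4) (tplus (ttimes (tvar 3) (tvar 6)) (tvar 2)))
                   (feq (tvar 5) (tplus (ttimes (tvar 1) (tvar 7)) (tvar 0))))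
             ltac:(repeat constructor))
          (sigma_definable_and _ _ _ _
             (sigma_definable_instance _ _ p 3 1 (Nat.add 8) Hp)
             (sigma_definable_instance _ _ p 2 0 (Nat.add 8) Hp)))))))).
  intros u v; simpl; setoid_rewrite HR; reflexivity.
Qed.

Section Cardinality.
Variables (n : nat) (M : structure).
Local Notation "x + y" := (s_add M x y).
Local Notation "x * y" := (s_mul M x y).
Local Notation "1" := (s_one M).

Lemma SigmaCard_iff a b :
  SigmaCard n M a b <-> exists R, sigma_relation n M R /\ inj_graph M R b a.
Proof.
  split.
  - intros [p [e [Hp G]]]; exists (fun u v => sat M (scons u (scons v e)) p).
    split; [exists p, e; split; [exact Hp | reflexivity] | exact G].
  - intros [R [[p [e [Hp HR]]] G]]; exists p, e; split; [exact Hp|].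
    apply (inj_graph_iff M R); [intros u v; symmetry; apply HR | exact G].
Qed.

Lemma SigmaCard_refl a : SigmaCard n M a a.
Proof.
  apply SigmaCard_iff; exists (id_graph M a).
  split; [apply sigma_relation_id | apply inj_graph_id].
Qed.

Lemma SigmaCard_trans a b c : SigmaCard n M a c -> SigmaCard n M c b -> SigmaCard n M a b.
Proof.
  rewrite !SigmaCard_iff; intros [R2 [D2 G2]] [R1 [D1 G1]].
  exists (comp_graph M R1 c R2).
  split; [apply sigma_relation_comp | apply inj_graph_comp]; assumption.
Qed.

Lemma SigmaCard_closed_iff a (f : M -> M) :
  (forall y x, SigmaCard n M y x -> SigmaCard n M (f y) (f x)) ->
  (SigmaCard n M a (f a) <-> forall x, SigmaCard n M a x -> SigmaCard n M a (f x)).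
Proof.
  intros Hf; split.
  - intros Ha x Hx; exact (SigmaCard_trans _ _ _ Ha (Hf _ _ Hx)).
  - intros H; apply H, SigmaCard_refl.
Qed.

Hypothesis Hpa : PAminus M.

Lemma SigmaCard_succ a x : SigmaCard n M a x -> SigmaCard n M (a + 1) (x + 1).
Proof.
  rewrite !SigmaCard_iff; intros [R [D G]]; exists (succ_graph M R x a).
  split; [apply sigma_relation_succ_graph | apply inj_graph_succ]; assumption.
Qed.

Lemma SigmaCard_double a x : SigmaCard n M a x -> SigmaCard n M ((1 + 1) * a) ((1 + 1) * x).
Proof.
  rewrite !SigmaCard_iff, !(two_mul M Hpa); intros [R [D G]]; exists (double_graph M R x a).
  split; [apply sigma_relation_double_graph | apply inj_graph_double]; assumption.
Qed.

Hypothesis Hind : Delta0Induction M.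

Lemma SigmaCard_square a x : SigmaCard n M a x -> SigmaCard n M (a * a) (x * x).
Proof.
  rewrite !SigmaCard_iff; intros [R [D G]]; exists (square_graph M R x a).
  split; [apply sigma_relation_square_graph | apply inj_graph_square]; assumption.
Qed.

End Cardinality.

Theorem proposition6p5 :
  forall (n : nat) (M : structure), IDelta0Model M -> forall a : M,
    (SigmaCard n M a (s_add M a (s_one M)) <->
       (forall x : M, SigmaCard n M a x -> SigmaCard n M a (s_add M x (s_one M)))) /\
    (SigmaCard n M a (s_mul M (s_add M (s_one M) (s_one M)) a) <->
       (forall x : M, SigmaCard n M a x ->
          SigmaCard n M a (s_mul M (s_add M (s_one M) (s_one M)) x))) /\
    (SigmaCard n M a (s_mul M a a) <->
       (forall x : M, SigmaCard n M a x -> SigmaCard n M a (s_mul M x x))).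
Proof.
  intros n M [Hpa Hind] a; split; [|split].
  - apply (SigmaCard_closed_iff n M a (fun x => s_add M x (s_one M))).
    exact (SigmaCard_succ n M Hpa).
  - apply (SigmaCard_closed_iff n M a (s_mul M (s_add M (s_one M) (s_one M)))).
    exact (SigmaCard_double n M Hpa).
  - apply (SigmaCard_closed_iff n M a (fun x => s_mul M x x)).
    exact (SigmaCard_square n M Hpa Hind).
Qed.
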